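(* Let $A$ be a one-dimensional integral domain. Every overring of $A$ that is finitely generated as an $A$-algebra, flat over $A$, and well-centered on $A$ is a localization of $A$.
   Context: An overring of $A$ is a subring of the field of fractions of $A$ containing $A$. $B$ is well-centered on $A$ if for each $b\in B$ there is a unit $u$ of $B$ with $ub\in A$. $B$ is a localization of $A$ if $B=S^{-1}A$ for a multiplicatively closed set $S$ of nonzero elements of $A$. *)

From HB Require Import structures.
From mathcomp Require Import all_boot all_order all_algebra.
Set Implicit Arguments. Unset Strict Implicit. Unset Printing Implicit Defensive.
Import Order.TTheory GRing.Theory Num.Theory.
Local Open Scope ring_scope.

Section Defs.
Variable A : idomainType.
Local Notation K := {fraction A}.
Local Notation "x %:F" := (@tofrac A x).

Definition prime_ideal (P : A -> Prop) : Prop :=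
  [/\ P 0,
      (forall x y, P x -> P y -> P (x + y)),
      (forall a x, P x -> P (a * x)),
      ~ P 1 &
      (forall x y, P (x * y) -> P x \/ P y)].

Definition strict_incl (P Q : A -> Prop) : Prop :=
  (forall x, P x -> Q x) /\ exists x, Q x /\ ~ P x.

Definition krull_dim_one : Prop :=
  (exists P Q, [/\ prime_ideal P, prime_ideal Q & strict_incl P Q]) /\
  ~ (exists P Q R, [/\ prime_ideal P, prime_ideal Q, prime_ideal R,
                      strict_incl P Q & strict_incl Q R]).

Definition inA (x : K) : Prop := exists a : A, x = a%:F.

Definition subring (B : K -> Prop) : Prop :=
  [/\ B 1,
      (forall x y, B x -> B y -> B (x - y)) &
      (forall x y, B x -> B y -> B (x * y))].

Definition overring (B : K -> Prop) : Prop :=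
  subring B /\ (forall a : A, B a%:F).

(* B is finitely generated as an A-algebra: there is a finite family s in B
   such that B is the A-subalgebra of K generated by s, i.e. B is contained
   in every subring of K containing A and s. *)
Definition fg_algebra (B : K -> Prop) : Prop :=
  exists s : seq K, (forall x, x \in s -> B x) /\
    forall S : K -> Prop, subring S -> (forall a : A, S a%:F) ->
      (forall x, x \in s -> S x) -> forall b, B b -> S b.

(* B is flat over A, via the equational criterion of flatness. *)
Definition flat_over (B : K -> Prop) : Prop :=
  forall (n : nat) (a : 'I_n -> A) (x : 'I_n -> K),
    (forall i, B (x i)) -> \sum_i (a i)%:F * x i = 0 ->
    exists (m : nat) (c : 'I_n -> 'I_m -> A) (y : 'I_m -> K),
      [/\ (forall j, B (y j)),
          (forall i, x i = \sum_j (c i j)%:F * y j) &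
          (forall j, \sum_i a i * c i j = 0)].

Definition unit_of (B : K -> Prop) (u : K) : Prop :=
  B u /\ exists v, B v /\ u * v = 1.

Definition well_centered (B : K -> Prop) : Prop :=
  forall b, B b -> exists u, unit_of B u /\ inA (u * b).

Definition mult_closed_nonzero (S : A -> Prop) : Prop :=
  [/\ S 1, (forall s t, S s -> S t -> S (s * t)) & (forall s, S s -> s != 0)].

Definition is_localization (B : K -> Prop) : Prop :=
  exists S : A -> Prop, mult_closed_nonzero S /\
    forall x : K, B x <-> exists a s, S s /\ x = a%:F / s%:F.

End Defs.

From mathcomp Require Import all_boot all_order all_algebra generic_quotient ring.
From mathcomp Require classical_sets.
From Stdlib Require Import Classical_Prop.
Set Implicit Arguments. Unset Strict Implicit. Unset Printing Implicit Defensive.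
Import Order.TTheory GRing.Theory Num.Theory.
Local Open Scope ring_scope.
Local Notation "x %:F" := (@tofrac _ x).

(* Let S be the set of nonzero s in A with 1/s in B; clearly S^-1 A is contained
   in B, and the point is the converse.  Flatness makes the conductor (A : x) of
   each generator x of B extend to the unit ideal of B; this yields h_1, ..., h_k
   in A with (h_1, ..., h_k)B = B and B contained in every A[1/h_i].  Given
   b = n/d in B, A/dA is zero-dimensional because dim A = 1, so the powers of each
   h_i stabilise modulo d; this produces g in A with d | g h_i^N for all i and g
   outside every prime containing all the h_i.  Then g/d lies in B, and
   well-centeredness gives a unit u of B with u g/d = a in A.  At every prime of A
   either some h_i or g is invertible, and g u = a d, g u b = a n; hence u and u b
   lie in A, so b = (u b)/u with 1/u in B. *)

Section Ideals.
Variable A : idomainType.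
Implicit Types (I J M P Q T : A -> Prop) (a t x y z : A) (hs : seq A).

Definition ideal I :=
  [/\ I 0, forall x y, I x -> I y -> I (x + y) & forall a x, I x -> I (a * x)].

Definition mult_closed T := T 1 /\ forall x y, T x -> T y -> T (x * y).

Definition avoids I T := forall x, I x -> T x -> False.

Definition adjoin I x z := exists m r, I m /\ z = m + x * r.

Definition dvdr t x := exists q, x = t * q.

Lemma ideal_dvdr t : ideal (dvdr t).
Proof.
split; first by exists 0; rewrite mulr0.
- by move=> _ _ [q1 ->] [q2 ->]; exists (q1 + q2); rewrite mulrDr.
- by move=> a _ [q ->]; exists (a * q); rewrite mulrCA.
Qed.

Lemma dvdr_mulXn t f h m n :
  (m <= n)%N -> dvdr t (f * h ^+ m) -> dvdr t (f * h ^+ n).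
Proof.
have [_ _ dvdrM] := ideal_dvdr t.
by move=> /subnK <- /(dvdrM (h ^+ (n - m))); rewrite exprD mulrCA.
Qed.

Lemma prime_ideal_ideal P : prime_ideal P -> ideal P.
Proof. by case. Qed.

Lemma prime_ideal0 : prime_ideal (fun x : A => x = 0).
Proof.
split=> //.
- by move=> x y -> ->; rewrite addr0.
- by move=> a x ->; rewrite mulr0.
- by move/eqP; rewrite oner_eq0.
- by move=> x y /eqP; rewrite mulf_eq0 => /orP[/eqP|/eqP]; [left|right].
Qed.

Lemma prime_idealX P h n : prime_ideal P -> ~ P h -> ~ P (h ^+ n).
Proof.
case=> _ _ _ P1 Pmul Ph; elim: n => [|n IHn]; first by rewrite expr0.
by rewrite exprS => /Pmul[].
Qed.

Lemma ideal_adjoin I x : ideal I -> ideal (adjoin I x).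
Proof.
case=> I0 ID IM; split; first by exists 0, 0; rewrite mulr0 addr0.
- move=> _ _ [m1 [r1 [Im1 ->]]] [m2 [r2 [Im2 ->]]].
  by exists (m1 + m2), (r1 + r2); split; [exact: ID | rewrite mulrDr addrACA].
- move=> a _ [m [r [Im ->]]].
  by exists (a * m), (a * r); split; [exact: IM | rewrite mulrDr mulrCA].
Qed.

Lemma adjoin_sub I x y : I y -> adjoin I x y.
Proof. by move=> Iy; exists y, 0; rewrite mulr0 addr0. Qed.

Lemma adjoin_self I x : I 0 -> adjoin I x x.
Proof. by move=> I0; exists 0, 1; rewrite add0r mulr1. Qed.

Lemma maximal_ideal_avoiding J T : ideal J -> avoids J T ->
  exists M, [/\ ideal M, forall x, J x -> M x, avoids M T &
    forall I, ideal I -> (forall x, M x -> I x) -> avoids I T -> forall x, I x -> M x].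
Proof.
move=> idJ JT.
pose adm X := [/\ ideal X, forall x, J x -> X x & avoids X T].
(* The empty set is admitted so that the union of the empty chain qualifies. *)
pose P X := (forall x, ~ X x) \/ adm X.
have admP X x : P X -> X x -> adm X by case=> // /(_ x).
have [|M [PM Mmax]] := @classical_sets.Zorn_bigcup _ P.
  move=> F FP Ftot.
  have [[X0 [FX0 admX0]]|noadm] := classic (exists X, F X /\ adm X); last first.
    left=> x [X FX Xx]; apply: noadm; exists X; split=> //; exact: admP (FP X FX) Xx.
  have [[X0_0 _ _] JX0 _] := admX0.
  right; split; last 2 first.
  - by move=> x Jx; exists X0 => //; exact: JX0.
  - by move=> x [X FX Xx]; have [_ _ XT] := admP _ _ (FP X FX) Xx; exact: XT.
  split; first by exists X0.
  - move=> x y [X FX Xx] [Y FY Yy].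
    have [XY|YX] := Ftot X Y FX FY.
    + have [[_ YD _] _ _] := admP _ _ (FP Y FY) Yy.
      by exists Y => //; apply: YD => //; exact: XY.
    + have [[_ XD _] _ _] := admP _ _ (FP X FX) Xx.
      by exists X => //; apply: XD => //; exact: YX.
  - move=> a x [X FX Xx]; have [[_ _ XM] _ _] := admP _ _ (FP X FX) Xx.
    by exists X => //; exact: XM.
have [M0|admM] := PM; last first.
  case: admM => idM JM MT; exists M; split=> // I idI MI IT x Ix.
  apply: NNPP => nMx; apply: (Mmax I); first by split=> // IM; exact/nMx/IM.
  by right; split=> // y Jy; exact/MI/JM.
have [J0 _ _] := idJ.
by exfalso; apply: (Mmax J); [split=> [x /M0 | /(_ 0 J0) /M0] | right].
Qed.

Lemma prime_of_maximal_avoiding M T : ideal M -> mult_closed T -> avoids M T ->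
  (forall I, ideal I -> (forall x, M x -> I x) -> avoids I T -> forall x, I x -> M x) ->
  prime_ideal M.
Proof.
move=> idM [T1 TM] MT Mmax; have [M0 MD MM] := idM.
have escape x : ~ M x -> exists m r, M m /\ T (m + x * r).
  move=> Mx; apply: NNPP => none; apply/Mx/(Mmax (adjoin M x)).
  - exact: ideal_adjoin.
  - exact: adjoin_sub.
  - by move=> _ [m [r [Mm ->]]] Tz; apply: none; exists m, r.
  - exact: adjoin_self.
split=> //; first by move=> M1; exact: MT M1 T1.
move=> x y Mxy; apply: NNPP => /not_or_and[Mx My].
have [m1 [r1 [Mm1 Tx]]] := escape x Mx.
have [m2 [r2 [Mm2 Ty]]] := escape y My.
apply: (MT _ _ (TM _ _ Tx Ty)).
have -> : (m1 + x * r1) * (m2 + y * r2) =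
    (m2 + y * r2) * m1 + (x * r1 * m2 + r1 * r2 * (x * y)) by ring.
by apply: (MD); last apply: (MD); apply: (MM).
Qed.

Lemma prime_ideal_separation J T : ideal J -> mult_closed T -> avoids J T ->
  exists P, [/\ prime_ideal P, forall x, J x -> P x & avoids P T].
Proof.
move=> idJ mT JT; have [M [idM JM MT Mmax]] := maximal_ideal_avoiding idJ JT.
by exists M; split=> //; exact: (prime_of_maximal_avoiding idM mT MT Mmax).
Qed.

Lemma proper_ideal_sub_prime I : ideal I -> ~ I 1 ->
  exists P, prime_ideal P /\ forall x, I x -> P x.
Proof.
move=> idI I1.
have [|x Ix x1|P [PP IP _]] := @prime_ideal_separation I (eq^~ 1) idI.
- by split=> // x y -> ->; rewrite mulr1.
- by apply: I1; rewrite -x1.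
- by exists P.
Qed.

Hypothesis dimA : krull_dim_one A.

(* Since A/tA is zero-dimensional, the powers of x stabilise in it. *)
Lemma dim_one_pi_regular t x : t != 0 ->
  exists n r, dvdr t (x ^+ n - x ^+ n.+1 * r).
Proof.
move=> t0; apply: NNPP => no_n.
pose T z := exists n r, z = x ^+ n * (1 - x * r).
have mT : mult_closed T.
  split; first by exists 0%N, 0; rewrite expr0 mulr0 subr0 mulr1.
  move=> _ _ [n [r ->]] [m [s ->]].
  by exists (n + m)%N, (r + s - x * r * s); rewrite exprD; ring.
have [|P [PP tP PT]] := prime_ideal_separation (ideal_dvdr t) mT.
  move=> _ [q ->] [n [r E]]; apply: no_n; exists n, r, q.
  by rewrite E exprS; ring.
have [P0 _ _ _ _] := PP.
have [Q [PQ PxQ]] : exists Q, prime_ideal Q /\ forall z, adjoin P x z -> Q z.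
  apply: proper_ideal_sub_prime; first exact/ideal_adjoin/prime_ideal_ideal.
  move=> [p [r [Pp E]]]; apply: (PT p Pp); exists 0%N, r.
  by rewrite expr0 mul1r E; ring.
case: dimA => _; apply; exists (fun z => z = 0), P, Q; split=> //.
- exact: prime_ideal0.
- split; first by move=> z ->.
  by exists t; split; [apply: tP; exists 1; rewrite mulr1 | exact/eqP].
- split; first by move=> z Pz; apply: PxQ; exact: adjoin_sub.
  exists x; split; first by apply: PxQ; exact: adjoin_self.
  by move=> Px; apply: (PT x Px); exists 1%N, 0; rewrite mulr0 subr0 mulr1.
Qed.

Lemma dim_one_pi_factor t hs : t != 0 ->
  exists g N, (forall h, h \in hs -> dvdr t (g * h ^+ N)) /\
    forall Q, prime_ideal Q -> (forall h, h \in hs -> Q h) -> ~ Q g.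
Proof.
move=> t0; have [_ _ dvdrM] := ideal_dvdr t.
elim: hs => [|h hs [g [N [dvd_g Qg]]]].
  by exists 1, 0%N; split=> // Q [_ _ _ Q1 _] _.
have [n [r dvd_h]] := dim_one_pi_regular h t0.
exists (g * (1 - h * r)), (maxn N n); split=> [x|Q PQ Qhs].
  rewrite inE => /predU1P[->|xhs].
    apply: dvdr_mulXn (leq_maxr N n) _.
    have -> : g * (1 - h * r) * h ^+ n = g * (h ^+ n - h ^+ n.+1 * r).
      by rewrite exprS; ring.
    exact: dvdrM.
  apply: dvdr_mulXn (leq_maxl N n) _.
  have -> : g * (1 - h * r) * x ^+ N = (1 - h * r) * (g * x ^+ N) by ring.
  exact/dvdrM/dvd_g.
have [_ QD QM] := prime_ideal_ideal PQ; have [_ _ _ Q1 Qmul] := PQ.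
move=> /Qmul[|Qf]; first by apply: Qg => // x xhs; apply: Qhs; rewrite inE xhs orbT.
(* h lies in Q, hence 1 = (1 - h r) + h r would too. *)
apply: Q1; rewrite -(subrK (h * r) 1); apply: QD => //.
by rewrite mulrC; apply: QM; apply: Qhs; exact: mem_head.
Qed.

End Ideals.

Section Fractions.
Variable A : idomainType.
Local Notation K := {fraction A}.
Implicit Types (x y b : K) (a h : A) (hs : seq A).

Definition conductor x a := inA (a%:F * x).

Lemma ideal_conductor x : ideal (conductor x).
Proof.
split; first by exists 0; rewrite !rmorph0 mul0r.
- by move=> u v [a1 E1] [a2 E2]; exists (a1 + a2); rewrite !rmorphD mulrDl E1 E2.
- by move=> a u [a1 E1]; exists (a * a1); rewrite !rmorphM -mulrA E1.
Qed.

Lemma inA_local x :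
  (forall Q, prime_ideal Q -> exists s, ~ Q s /\ conductor x s) -> inA x.
Proof.
move=> loc; apply: NNPP => xA.
have [|Q [PQ xQ]] := proper_ideal_sub_prime (ideal_conductor x).
  by move=> [a Ex]; apply: xA; exists a; rewrite -Ex rmorph1 mul1r.
by have [s [Qs /xQ]] := loc Q PQ.
Qed.

Lemma frac_numden x : exists n d, d != 0 /\ x * d%:F = n%:F.
Proof.
elim/quotW: x => r; exists r.1, r.2; split; first exact: denom_ratioP.
change (FracField.mul (\pi_(FracField.type A) r)%qT (FracField.tofrac r.2)
  = FracField.tofrac r.1).
rewrite !piE; apply/eqmodP; rewrite /= FracField.equivfE /FracField.mulf.
rewrite !numden_Ratio ?(oner_eq0, mulf_neq0, denom_ratioP) // !mulr1 mulrC.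
exact: eqxx.
Qed.

Lemma subring_localization h : subring (fun x => exists N, conductor x (h ^+ N)).
Proof.
split; first by exists 0%N, 1; rewrite expr0 rmorph1 mulr1.
- move=> x y [N1 [a1 E1]] [N2 [a2 E2]].
  exists (N1 + N2)%N, (h ^+ N2 * a1 - h ^+ N1 * a2).
  by rewrite rmorphB !rmorphM /= -E1 -E2 !rmorphXn exprD; ring.
- move=> x y [N1 [a1 E1]] [N2 [a2 E2]]; exists (N1 + N2)%N, (a1 * a2).
  by rewrite rmorphM /= -E1 -E2 !rmorphXn exprD; ring.
Qed.

Lemma inA_of_conductor hs g x :
  (forall h, h \in hs -> exists N, conductor x (h ^+ N)) ->
  (forall Q, prime_ideal Q -> (forall h, h \in hs -> Q h) -> ~ Q g) ->
  conductor x g -> inA x.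
Proof.
move=> hs_loc g_avoid gx; apply: inA_local => Q PQ.
have [[h [hhs Qh]]|all_Q] := classic (exists h, h \in hs /\ ~ Q h).
  have [N xhN] := hs_loc h hhs.
  by exists (h ^+ N); split=> //; exact: prime_idealX.
exists g; split=> //; apply: g_avoid => // h hhs.
by apply: NNPP => Qh; apply: all_Q; exists h.
Qed.

End Fractions.

Section Overring.
Variables (A : idomainType) (B : {fraction A} -> Prop).
Local Notation K := {fraction A}.
Implicit Types (x y b c : K) (a h : A) (hs : seq A).
Hypothesis SB : subring B.
Hypothesis AB : forall a, B a%:F.

Lemma subring0 : B 0.
Proof. by case: SB => B1 BB _; rewrite -(subrr 1); exact: BB. Qed.

Lemma subringD x y : B x -> B y -> B (x + y).
Proof.
case: SB => _ BB _ Bx By; rewrite -[y]opprK; apply: (BB) => //.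
by rewrite -sub0r; apply: BB => //; exact: subring0.
Qed.

Lemma subringM x y : B x -> B y -> B (x * y).
Proof. by case: SB => _ _; apply. Qed.

Lemma subring_sum (I : eqType) (r : seq I) (F : I -> K) :
  (forall i, i \in r -> B (F i)) -> B (\sum_(i <- r) F i).
Proof.
move=> BF; rewrite big_seq; apply: (big_ind B) => //.
- exact: subring0.
- exact: subringD.
Qed.

Definition gen_ideal hs x := exists r : seq (A * K),
  (forall p, p \in r -> p.1 \in hs /\ B p.2) /\ x = \sum_(p <- r) p.1%:F * p.2.

Lemma gen_ideal_sub hs1 hs2 x :
  {subset hs1 <= hs2} -> gen_ideal hs1 x -> gen_ideal hs2 x.
Proof.
move=> sub12 [r [rP ->]]; exists r; split=> // p /rP[p1 Bp2].
by split=> //; exact: sub12.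
Qed.

Lemma gen_idealD hs x y : gen_ideal hs x -> gen_ideal hs y -> gen_ideal hs (x + y).
Proof.
move=> [r1 [r1P ->]] [r2 [r2P ->]]; exists (r1 ++ r2); rewrite big_cat.
by split=> // p; rewrite mem_cat => /orP[/r1P|/r2P].
Qed.

Lemma gen_idealMr hs x b : gen_ideal hs x -> B b -> gen_ideal hs (x * b).
Proof.
move=> [r [rP ->]] Bb; exists [seq (p.1, p.2 * b) | p <- r]; split.
  by move=> _ /mapP[p /rP[p1 Bp2] ->]; split=> //; exact: subringM.
by rewrite big_map mulr_suml; apply: eq_bigr => p _; rewrite mulrA.
Qed.

Lemma gen_idealM hs1 hs2 x y : gen_ideal hs1 x -> gen_ideal hs2 y ->
  gen_ideal [seq h1 * h2 | h1 <- hs1, h2 <- hs2] (x * y).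
Proof.
move=> [r1 [r1P ->]] [r2 [r2P ->]].
exists [seq (p.1 * q.1, p.2 * q.2) | p <- r1, q <- r2]; split.
  move=> _ /allpairsP[[p q] [/r1P[p1 Bp2] /r2P[q1 Bq2] ->]] /=.
  by split; [exact: allpairs_f | exact: subringM].
rewrite big_allpairs_dep mulr_suml; apply: eq_bigr => p _.
by rewrite mulr_sumr; apply: eq_bigr => q _; rewrite rmorphM /=; ring.
Qed.

Lemma gen_ideal_cons h hs x :
  gen_ideal (h :: hs) x <-> exists b c, [/\ B b, gen_ideal hs c & x = h%:F * b + c].
Proof.
split=> [[r [rP ->]]|[b [c [Bb [r [rP ->]] ->]]]]; last first.
  exists ((h, b) :: r); rewrite big_cons; split=> // p.
  rewrite inE => /predU1P[-> //|/rP[p1 Bp2]]; first by rewrite mem_head.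
  by rewrite inE p1 orbT.
exists (\sum_(p <- r | p.1 == h) p.2), (\sum_(p <- r | p.1 != h) p.1%:F * p.2).
split.
- by rewrite -big_filter; apply: subring_sum => p; rewrite mem_filter => /andP[_ /rP[]].
- exists [seq p <- r | p.1 != h]; rewrite big_filter; split=> // p.
  rewrite mem_filter => /andP[ph /rP[]]; rewrite inE (negPf ph) /=; exact: conj.
- rewrite (bigID (fun p => p.1 == h)) /= mulr_sumr; congr (_ + _).
  by apply: eq_bigr => p /eqP ->.
Qed.

Lemma gen_ideal_consX h hs N :
  gen_ideal (h :: hs) 1 -> gen_ideal (h ^+ N :: hs) 1.
Proof.
move=> /gen_ideal_cons[b [c [Bb chs Ebc]]]; apply/gen_ideal_cons.
elim: N => [|N [a [d [Ba dhs Ead]]]].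
  exists 1, 0; split; [by case: SB | | by rewrite expr0 rmorph1 !mulr1 addr0].
  by exists [::]; rewrite big_nil.
exists (a * b), ((h ^+ N)%:F * a * c + d); split.
- exact: subringM.
- apply: gen_idealD => //; rewrite mulrC; apply: gen_idealMr => //.
  by apply: subringM => //; exact: AB.
- have -> : 1 = (h ^+ N)%:F * a * (h%:F * b + c) + d by rewrite -Ebc mulr1.
  by rewrite !rmorphXn exprS; ring.
Qed.

Lemma gen_idealX hs N :
  gen_ideal hs 1 -> gen_ideal [seq h ^+ N | h <- hs] 1.
Proof.
rewrite -[map _ _]cats0 -{1}[hs]cats0; move: [::] => hs2.
elim: hs hs2 => [|h hs IHhs] hs2 gen_h; first exact: gen_h.
have: gen_ideal (hs ++ h ^+ N :: hs2) 1.
  apply: gen_ideal_sub (gen_ideal_consX N gen_h) => y.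
  by rewrite !(inE, mem_cat) orbCA.
move=> /IHhs; apply: gen_ideal_sub => y.
by rewrite /= !(inE, mem_cat) orbCA.
Qed.

Lemma conductor_gen_ideal_mem hs y :
  gen_ideal hs 1 -> (forall h, h \in hs -> conductor y h) -> B y.
Proof.
move=> [r [rP r1]] hs_y; rewrite -[y]mul1r r1 mulr_suml.
apply: subring_sum => p /rP[p1 Bp2].
have [a Ea] := hs_y _ p1.
by rewrite mulrAC Ea; apply: subringM.
Qed.

Hypothesis flatB : flat_over B.

Lemma flat_conductor x : B x ->
  exists hs, (forall h, h \in hs -> conductor x h) /\ gen_ideal hs 1.
Proof.
move=> Bx; have [n [d [d0 Exd]]] := frac_numden x.
pose a (i : 'I_2) := if val i == 0%N then d else - n.
pose z (i : 'I_2) := if val i == 0%N then x else 1.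
have Bz i : B (z i) by rewrite /z; case: ifP => _ //; case: SB.
(* flatness applied to the relation d * x - n * 1 = 0 *)
have az0 : \sum_i (a i)%:F * z i = 0.
  by rewrite big_ord_recl big_ord1 /a /z /= rmorphN /= -Exd; ring.
have [m [c [w [Bw Ez Ec]]]] := flatB Bz az0.
exists [seq c (lift ord0 ord0) j | j <- enum 'I_m]; split.
  move=> _ /mapP[j _ ->]; exists (c ord0 j).
  apply: (mulIf (x := d%:F)); first by rewrite tofrac_eq0.
  have := Ec j; rewrite big_ord_recl big_ord1 /a /= => /eqP.
  rewrite addr_eq0 mulNr opprK => /eqP Ej.
  by rewrite -mulrA Exd -!rmorphM /= [c ord0 j * d]mulrC Ej mulrC.
exists [seq (c (lift ord0 ord0) j, w j) | j <- enum 'I_m]; split.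
  by move=> _ /mapP[j _ ->]; split; [apply: map_f; rewrite mem_enum | exact: Bw].
by rewrite big_map big_enum /=; exact: (Ez (lift ord0 ord0)).
Qed.

Lemma flat_common_conductor (s : seq K) : (forall x, x \in s -> B x) ->
  exists hs, (forall h, h \in hs -> forall x, x \in s -> conductor x h) /\
    gen_ideal hs 1.
Proof.
elim: s => [|x s IHs] Bs.
  exists [:: 1]; split=> //; exists [:: (1, 1)].
  split; last by rewrite big_seq1 rmorph1 mulr1.
  by move=> p; rewrite inE => /eqP -> /=; split; [exact: mem_head | case: SB].
have [hs1 [hs1_s gen1]] := IHs (fun y ys => Bs y (mem_behead (s := x :: s) ys)).
have [hs2 [hs2_x gen2]] := flat_conductor (Bs x (mem_head x s)).
exists [seq h1 * h2 | h1 <- hs1, h2 <- hs2]; split; last first.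
  by rewrite -[1]mulr1; exact: gen_idealM.
move=> _ /allpairsP[[h1 h2] [hhs1 hhs2 ->]] y /=.
rewrite inE => /predU1P[->|ys].
  by have [_ _ condM] := ideal_conductor x; exact/condM/hs2_x.
by have [_ _ condM] := ideal_conductor y; rewrite mulrC; exact/condM/hs1_s.
Qed.

Lemma fg_flat_cover : fg_algebra B -> exists hs, gen_ideal hs 1 /\
  forall h, h \in hs -> forall b, B b -> exists N, conductor b (h ^+ N).
Proof.
move=> [s [Bs gen_s]]; have [hs [hs_s gen1]] := flat_common_conductor Bs.
exists hs; split=> // h hhs; apply: gen_s.
- exact: subring_localization.
- by move=> a; exists 0%N, a; rewrite expr0 rmorph1 mul1r.
- by move=> x xs; exists 1%N; rewrite expr1; exact: hs_s.
Qed.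

Hypotheses (dimA : krull_dim_one A) (fgB : fg_algebra B) (wcB : well_centered B).

Lemma unit_denominator b : B b ->
  exists al be, [/\ al != 0, B (al%:F)^-1 & b = be%:F / al%:F].
Proof.
move=> Bb; have [hs [gen1 cover]] := fg_flat_cover fgB.
have [n [d [d0 Ebd]]] := frac_numden b.
have [g [N [dvd_g g_avoid]]] := dim_one_pi_factor dimA hs d0.
have dF : d%:F != 0 by rewrite tofrac_eq0.
pose y := g%:F / d%:F.
have By : B y.
  apply: (conductor_gen_ideal_mem (gen_idealX N gen1)) => _ /mapP[h hhs ->].
  have [q Eq] := dvd_g h hhs; exists q.
  by rewrite /y mulrA -rmorphM [_ * g]mulrC Eq rmorphM /= mulrAC divff // mul1r.
have [u [[Bu [v [Bv uv]]] [a Ea]]] := wcB By.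
have u0 : u != 0 by apply: contra_eq_neq uv => ->; rewrite mul0r eq_sym oner_neq0.
have Egu : g%:F * u = a%:F * d%:F by rewrite -Ea /y -mulrA divfK // mulrC.
have inA_B x : B x -> conductor x g -> inA x.
  by move=> Bx; apply: inA_of_conductor (fun h hhs => cover h hhs x Bx) g_avoid.
have [al Eal] : inA u by apply: inA_B => //; exists (a * d); rewrite rmorphM Egu.
have [be Ebe] : inA (u * b).
  apply: inA_B; first exact: subringM.
  by exists (a * n); rewrite rmorphM /= -Ebd mulrA Egu; ring.
exists al, be; split.
- by rewrite -tofrac_eq0 -Eal.
- by rewrite -Eal -[u^-1]mulr1 -uv mulKf.
- by rewrite -Eal -Ebe mulrAC divff // mul1r.
Qed.

End Overring.

Theorem theorem4p22 (A : idomainType) (B : {fraction A} -> Prop) :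
  krull_dim_one A -> overring B -> fg_algebra B -> flat_over B ->
  well_centered B -> is_localization B.
Proof.
move=> dimA [SB AB] fgB flatB wcB.
have [B1 _ _] := SB.
exists (fun s => s != 0 /\ B (s%:F)^-1); split.
  split=> [|s t [s0 Bs] [t0 Bt]|s []] //.
  - by split; [exact: oner_neq0 | rewrite rmorph1 invr1].
  - by split; [rewrite mulf_neq0 | rewrite rmorphM invfM; exact: subringM].
move=> x; split=> [Bx|[a [s [[_ Bs] ->]]]]; last exact: subringM.
have [al [be [al0 Bal ->]]] := unit_denominator SB AB flatB dimA fgB wcB Bx.
by exists be, al.
Qed.
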